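(* Let $(X,\rho)$ be a compact metric space of diameter $d$ and let $\mu$ be a nondegenerate Borel probability measure on $X$. Then for every $\varepsilon>0$, $$H_{\rho,(d+1)\varepsilon}(\mu)\le H'_{\rho,\varepsilon}(\mu).$$
   Context: For a Borel probability measure $\mu$ on a metric space $(X,\rho)$: $H_{\rho,\varepsilon}(\mu)=\inf\{H(\nu): k_\rho(\nu,\mu)<\varepsilon\}$, where $\nu$ ranges over discrete probability measures $\nu=\sum_i c_i\delta_{x_i}$ with finite entropy $H(\nu)=-\sum_i c_i\ln c_i$, and $k_\rho$ is the Kantorovich (Monge–Kantorovich transportation, Wasserstein-1) metric on Borel probability measures on $(X,\rho)$. Also $H'_{\rho,\varepsilon}(\mu)=\min\{\ln k: \exists X'\subset X,\ \mu(X')>1-\varepsilon,\ \exists x_1,\dots,x_k \text{ with } X'\subset\bigcup_{i=1}^kV_\varepsilon(x_i)\}$, where $V_\varepsilon(x)$ is the $\rho$-ball of radius $\varepsilon$ centered at $x$. Nondegenerate means every nonempty open set has positive measure. *)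

From HB Require Import structures.
From mathcomp Require Import all_boot all_order all_algebra.
From mathcomp Require Import all_classical all_reals all_analysis.
Set Implicit Arguments. Unset Strict Implicit. Unset Printing Implicit Defensive.
Import Order.TTheory GRing.Theory Num.Theory.
Local Open Scope classical_set_scope.
Local Open Scope ring_scope.

Section Defs.
Context {R : realType}.

Definition km_is_metric {X : Type} (rho : X -> X -> R) : Prop :=
  [/\ forall x y, 0 <= rho x y,
      forall x y, rho x y = 0 <-> x = y,
      forall x y, rho x y = rho y x &
      forall x y z, rho x z <= rho x y + rho y z].

Definition km_rball {X : Type} (rho : X -> X -> R) (x : X) (r : R) : set X :=
  [set y | rho x y < r].

Definition km_rho_open {X : Type} (rho : X -> X -> R) (A : set X) : Prop :=
  forall x, A x -> exists2 r : R, 0 < r & km_rball rho x r `<=` A.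

Definition km_rho_compact {X : Type} (rho : X -> X -> R) : Prop :=
  forall (I : Type) (U : I -> set X), (forall i, km_rho_open rho (U i)) ->
    setT `<=` \bigcup_(i in setT) U i ->
    exists F : set I, finite_set F /\ setT `<=` \bigcup_(i in F) U i.

Definition km_diam {X : Type} (rho : X -> X -> R) : R :=
  sup [set rho z.1 z.2 | z in [set: X * X]].

Definition km_is_borel {d} {X : measurableType d} (rho : X -> X -> R) : Prop :=
  (@measurable d X) = <<s km_rho_open rho >>.

Definition km_nondegenerate {d} {X : measurableType d} (rho : X -> X -> R)
  (mu : probability X R) : Prop :=
  forall A : set X, km_rho_open rho A -> A !=set0 -> (0 < mu A)%E.

(* A discrete probability measure nu = sum_i c_i delta_{x_i} is represented
   by weights c and atoms x; atoms with positive weight are distinct. *)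
Definition km_disc_mass {X : Type} (c : nat -> R) (x : nat -> X) (A : set X) : \bar R :=
  (\sum_(0 <= i <oo) (c i * \1_A (x i))%:E)%E.

(* Shannon km_entropy H(nu) = - sum_i c_i ln c_i (with 0 ln 0 = 0) *)
Definition km_entropy (c : nat -> R) : \bar R :=
  (\sum_(0 <= i <oo) (- (c i * ln (c i)))%:E)%E.

Definition km_discrete_prob {X : Type} (c : nat -> R) (x : nat -> X) : Prop :=
  [/\ forall i, 0 <= c i,
      (\sum_(0 <= i <oo) (c i)%:E)%E = 1%E &
      forall i j, 0 < c i -> 0 < c j -> x i = x j -> i = j].

Definition km_coupling {d} {X : measurableType d} (c : nat -> R) (x : nat -> X)
  (mu : probability X R) (pi : probability (X * X)%type R) : Prop :=
  forall A : set X, measurable A ->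
    pi (A `*` setT) = km_disc_mass c x A /\ pi (setT `*` A) = mu A.

Definition km_kantorovich {d} {X : measurableType d} (rho : X -> X -> R)
  (c : nat -> R) (x : nat -> X) (mu : probability X R) : \bar R :=
  ereal_inf [set (\int[pi]_z (rho z.1 z.2)%:E)%E | pi in km_coupling c x mu].

Definition km_H_eps {d} {X : measurableType d} (rho : X -> X -> R)
  (eps : R) (mu : probability X R) : \bar R :=
  ereal_inf [set e | exists (c : nat -> R) (x : nat -> X),
    [/\ km_discrete_prob c x, (km_entropy c < +oo)%E,
        (km_kantorovich rho c x mu < eps%:E)%E & e = km_entropy c]].

Definition km_H'_eps {d} {X : measurableType d} (rho : X -> X -> R)
  (eps : R) (mu : probability X R) : \bar R :=
  ereal_inf [set (ln k%:R)%:E | k in [set k : nat | (0 < k)%N /\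
    exists X' : set X, [/\ measurable X', ((1 - eps)%:E < mu X')%E &
      exists xs : 'I_k -> X, X' `<=` \bigcup_(i in setT) km_rball rho (xs i) eps]]].

End Defs.

From mathcomp Require Import all_boot all_order all_algebra.
From mathcomp Require Import all_classical all_reals all_analysis.
From mathcomp Require Import lra measurable_realfun.
Import Order.TTheory GRing.Theory Num.Theory.
Local Open Scope classical_set_scope.
Local Open Scope ring_scope.

(* Given a cover of X' by k balls V_eps(x_i), send every point to the first
   center whose ball contains it.  The image nu of mu under this map has at
   most k atoms, hence entropy at most ln k, and the graph of the map is a
   coupling of nu and mu.  Its cost is below eps on the balls and at most
   the diameter d on the rest, which has mu-measure less than eps; so
   k_rho(nu, mu) < eps + d eps. *)

Lemma neg_mul_ln_le (R : realType) (m : nat) (c : R) : (0 < m)%N -> 0 <= c ->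
  - (c * ln c) <= c * ln m%:R + (m%:R^-1 - c).
Proof.
move=> m0 c0; have m_gt0 : 0 < m%:R :> R by rewrite ltr0n.
have [->|cn0] := eqVneq c 0.
  by rewrite !mul0r oppr0 add0r addr0 invr_ge0 ler0n.
have c_gt0 : 0 < c by rewrite lt0r cn0.
have t_gt0 : 0 < m%:R^-1 / c by rewrite divr_gt0 ?invr_gt0.
(* ln t <= t - 1 at t = 1 / (m c) *)
have := @le_ln1Dx R (m%:R^-1 / c - 1) ltac:(lra).
rewrite addrCA subrr addr0 ln_div ?posrE ?invr_gt0 // lnV ?posrE //.
rewrite -(ler_pM2l c_gt0).
have -> : c * (m%:R^-1 / c - 1) = m%:R^-1 - c by rewrite mulrBr mulrC divfK ?mulr1.
rewrite mulrBr mulrN => h.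
lra.
Qed.

Lemma entropy_le_ln_card (R : realType) (c : nat -> R) (m : nat) : (0 < m)%N ->
  (forall i, 0 <= c i) -> \sum_(0 <= i < m) c i = 1 ->
  \sum_(0 <= i < m) - (c i * ln (c i)) <= ln m%:R.
Proof.
move=> m0 c0 c1.
apply: (le_trans (y := \sum_(0 <= i < m) (c i * ln m%:R + (m%:R^-1 - c i)))).
  by apply: ler_sum => i _; apply: neg_mul_ln_le.
rewrite big_split /= -mulr_suml c1 mul1r sumrB c1 sumr_const_nat subn0.
have -> : (m%:R : R)^-1 *+ m = 1 by rewrite -(mulr_natr (m%:R^-1)) mulVf // pnatr_eq0 -lt0n.
by rewrite subrr addr0.
Qed.

Lemma nneseries_finite_support {R : realType} (g : nat -> \bar R) (m : nat) :
  (forall i, (0 <= g i)%E) -> (forall i, (m <= i)%N -> g i = 0%E) ->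
  (\sum_(0 <= i <oo) g i)%E = (\sum_(0 <= i < m) g i)%E.
Proof.
move=> g0 gm; rewrite (nneseries_split 0 m) // add0n eseries0 ?adde0 //.
by move=> i mi _; apply: gm.
Qed.

(* The cost function rho need not be measurable for the product
   sigma-algebra, so [ge0_le_integral] does not apply; we compare the
   suprema over simple functions directly. *)
Lemma ge0_le_integral_lower (R : realType) d (T : measurableType d)
    (m : {measure set T -> \bar R}) (f g : T -> \bar R) :
  (forall z, (0 <= f z)%E) -> (forall z, (f z <= g z)%E) ->
  (\int[m]_z f z <= \int[m]_z g z)%E.
Proof.
move=> f0 fg; rewrite !ge0_integralE //; last by move=> z _; apply: le_trans (fg z).
apply: ereal_sup_le => _ [h hle <-]; exists h => // x.
by apply: le_trans (hle x) _; rewrite /patch mem_setT; exact: fg.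
Qed.

Section metric_facts.
Context {R : realType} {X : Type} {rho : X -> X -> R}.
Hypothesis rho_metric : km_is_metric rho.

Lemma km_rho_open_rball x r : km_rho_open rho (km_rball rho x r).
Proof.
have [_ _ _ rho_tri] := rho_metric.
move=> y /= xy; exists (r - rho x y); first by rewrite subr_gt0.
by move=> z /= yz; apply: le_lt_trans (rho_tri x y z) _; rewrite -ltrBrDl.
Qed.

Lemma km_rho_open_setC1 x : km_rho_open rho (~` [set x]).
Proof.
have [rho_ge0 rho_eq0 _ _] := rho_metric.
move=> y /= yx; exists (rho y x).
  by rewrite lt0r rho_ge0 andbT; apply/eqP => /rho_eq0.
by move=> z yz zx; move: yz; rewrite /km_rball /= zx ltxx.
Qed.

Lemma km_rho_compact_bounded : km_rho_compact rho -> X ->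
  exists B, forall x y, rho x y <= B.
Proof.
have [rho_ge0 _ rho_sym rho_tri] := rho_metric.
move=> rho_cpt x0.
have [F [finF coverF]] := rho_cpt nat (fun n => km_rball rho x0 n%:R)
  (fun n => km_rho_open_rball _ _)
  (fun y _ => ex_intro2 _ _ (Num.Def.archi_bound (rho x0 y)) I
     (archi_boundP (rho_ge0 _ _))).
have [fs Ffs] := finite_fsetP.1 finF.
pose N := \max_(i <- finmap.enum_fset fs) i.
have x0_le y : rho x0 y <= N%:R.
  have [i Fi hi] := coverF y I.
  apply/ltW/(lt_le_trans hi); rewrite ler_nat.
  by apply: (leq_bigmax_seq (F := id)) => //; move: Fi; rewrite Ffs.
exists (N%:R + N%:R) => x y; apply: le_trans (rho_tri x x0 y) _.
by rewrite rho_sym; apply: lerD.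
Qed.

Lemma le_km_diam : (exists B, forall x y, rho x y <= B) ->
  forall x y, rho x y <= km_diam rho.
Proof.
move=> [B rhoB] x y; apply: sup_upper_bound; last by exists (x, y).
split; first by exists (rho x y); exists (x, y).
by exists B => _ [[u v] _ <-]; apply: rhoB.
Qed.

End metric_facts.

Section first_center.
Context {R : realType} {d : measure_display} {X : measurableType d}.
Variables (rho : X -> X -> R) (eps : R) (x0 : X).

Definition first_center (s : seq X) (y : X) : X :=
  foldr (fun a r => if `[< rho a y < eps >] then a else r) x0 s.

Lemma first_center_in s y : first_center s y \in x0 :: s.
Proof.
elim: s => [|a s IH] /=; first by rewrite inE.
case: asboolP => _; first by rewrite !inE eqxx orbT.
by move: IH; rewrite !inE => /orP[->|->]; rewrite ?orbT.
Qed.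

Lemma first_center_rball s y : (exists2 a, a \in s & rho a y < eps) ->
  rho (first_center s y) y < eps.
Proof.
elim: s => [|a s IH] /=; first by case.
case: asboolP => // ay [b]; rewrite inE => /orP[/eqP-> //|bs] hb.
by apply: IH; exists b.
Qed.

Lemma measurable_first_center s :
  (forall a, measurable (km_rball rho a eps)) ->
  measurable_fun setT (first_center s).
Proof.
move=> mball; elim: s => [|a s IH] /=; first exact: measurable_cst.
move=> _ B mB; rewrite setTI.
have -> : (fun y => if `[< rho a y < eps >] then a else first_center s y) @^-1` B
    = (km_rball rho a eps `&` [set _ | B a]) `|`
      (~` km_rball rho a eps `&` first_center s @^-1` B).
  apply/seteqP; split => y /=.
    by case: asboolP => h By; [left|right].
  by case=> [[h Ba]|[h By]]; case: asboolP.
apply: measurableU; apply: measurableI => //.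
- have [Ba|Ba] := pselect (B a).
    by have -> : [set _ : X | B a] = setT by apply/seteqP; split.
  by have -> : [set _ : X | B a] = set0 by apply/seteqP; split.
- exact: measurableC.
- by rewrite -[_ @^-1` _]setTI; exact: IH.
Qed.

End first_center.

Section pushforward_on_finite_set.
Context {R : realType} {d : measure_display} {X : measurableType d}.
Variables (mu : probability X R) (f : X -> X) (s : seq X).
Hypothesis measurable_set1 : forall x : X, measurable [set x].
Hypothesis mf : measurable_fun setT f.
Hypothesis f_in : forall y, f y \in s.
Hypothesis s_uniq : uniq s.

Let n := size s.

(* The image measure nu = f_* mu, as weights c_i on the atoms x_i = s_i. *)
Definition push_weight (i : nat) : R :=
  if (i < n)%N then fine (mu (f @^-1` [set nth point s i])) else 0.
Definition push_atom (i : nat) : X := nth point s i.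

Let measurable_preimage A : measurable A -> measurable (f @^-1` A).
Proof. by move=> mA; rewrite -[_ @^-1` _]setTI; apply: mf. Qed.

Lemma push_weightE i : (i < n)%N ->
  (push_weight i)%:E = mu (f @^-1` [set push_atom i]).
Proof.
move=> ltin; rewrite /push_weight ltin fineK //.
exact/fin_num_measure/measurable_preimage.
Qed.

Lemma push_weight_ge0 i : 0 <= push_weight i.
Proof. by rewrite /push_weight; case: ifP => // _; apply/fine_ge0/measure_ge0. Qed.

Lemma push_weight_le1 i : push_weight i <= 1.
Proof.
rewrite /push_weight; case: ifP => // _; rewrite -lee_fin fineK.
  exact/probability_le1/measurable_preimage.
exact/fin_num_measure/measurable_preimage.
Qed.

Lemma push_weight_eq0 i : (n <= i)%N -> push_weight i = 0.
Proof. by rewrite /push_weight leqNgt => /negbTE ->. Qed.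

Lemma mu_preimage_sum A :
  mu (f @^-1` A) = (\sum_(0 <= i < n) (push_weight i * \1_A (push_atom i))%:E)%E.
Proof.
have -> : f @^-1` A = \big[setU/set0]_(i < n | `[< A (push_atom i) >])
    f @^-1` [set push_atom i].
  rewrite -bigcup_seq_cond; apply/seteqP; split => y.
    move=> Afy; have fs := f_in y.
    have lt_index : (index (f y) s < n)%N by rewrite index_mem.
    exists (Ordinal lt_index) => /=.
      by rewrite mem_index_enum /push_atom nth_index //; apply/asboolP.
    by rewrite /push_atom nth_index.
  by move=> -[i /andP[_ /asboolP Ai]] /= ->.
rewrite measure_bigsetU_ord_cond //.
- rewrite big_mkord (big_mkcond (fun i => `[< _ >])); apply: eq_bigr => i _.
  rewrite indicE; case: asboolP => h.
    by rewrite mem_set // mulr1 push_weightE.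
  by rewrite memNset // mulr0.
- by move=> i _; apply: measurable_preimage.
- move=> i j _ _ [y [/= -> e]]; apply/val_inj/eqP.
  by rewrite -(nth_uniq point (ltn_ord i) (ltn_ord j) s_uniq); exact/eqP.
Qed.

Lemma km_disc_mass_push A :
  km_disc_mass push_weight push_atom A = mu (f @^-1` A).
Proof.
rewrite mu_preimage_sum /km_disc_mass (nneseries_finite_support _ n) //.
  by move=> i; rewrite lee_fin mulr_ge0 ?push_weight_ge0.
by move=> i /push_weight_eq0 ->; rewrite mul0r.
Qed.

Lemma sum_push_weight : \sum_(0 <= i < n) push_weight i = 1.
Proof.
apply/eqP; rewrite -eqe -sumEFin; apply/eqP.
rewrite -(probability_setT mu) -(preimage_setT f) mu_preimage_sum.
by apply: eq_bigr => i _; rewrite indicE mem_set // mulr1.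
Qed.

Lemma push_discrete_prob : km_discrete_prob push_weight push_atom.
Proof.
split; first exact: push_weight_ge0.
  rewrite (nneseries_finite_support _ n) ?sumEFin ?sum_push_weight //.
    by move=> i; rewrite lee_fin push_weight_ge0.
  by move=> i /push_weight_eq0 ->.
have lt_n k : 0 < push_weight k -> (k < n)%N.
  by case: (ltnP k n) => // /push_weight_eq0 ->; rewrite ltxx.
move=> i j /lt_n ci /lt_n cj e.
by apply/eqP; rewrite -(nth_uniq point ci cj s_uniq); apply/eqP.
Qed.

Lemma km_entropy_push :
  km_entropy push_weight = (\sum_(0 <= i < n) - (push_weight i * ln (push_weight i)))%:E.
Proof.
rewrite /km_entropy (nneseries_finite_support _ n) ?sumEFin //.
  move=> i; rewrite lee_fin oppr_ge0 mulr_ge0_le0 ?push_weight_ge0 //.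
  exact/ln_le0/push_weight_le1.
by move=> i /push_weight_eq0 ->; rewrite mul0r oppr0.
Qed.

Lemma km_entropy_push_le : (0 < n)%N -> (km_entropy push_weight <= (ln n%:R)%:E)%E.
Proof.
move=> n0; rewrite km_entropy_push lee_fin.
exact: entropy_le_ln_card n0 push_weight_ge0 sum_push_weight.
Qed.

Definition graph_map (y : X) : (X * X)%type := (f y, y).

Lemma measurable_graph_map : measurable_fun setT graph_map.
Proof. exact: measurable_fun_pair. Qed.

Definition graph_coupling : probability (X * X)%type R :=
  distribution mu (mfun_Sub (mem_set measurable_graph_map) : {mfun X >-> _}).

Lemma graph_couplingE B : graph_coupling B = mu (graph_map @^-1` B).
Proof. by []. Qed.

Lemma km_coupling_graph : km_coupling push_weight push_atom mu graph_coupling.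
Proof.
move=> A mA; rewrite !graph_couplingE km_disc_mass_push; split; congr (mu _).
- by apply/seteqP; split => y /=; [case|].
- by apply/seteqP; split => y /=; [case|].
Qed.

Lemma graph_coupling_le B A : measurable B -> measurable A ->
  graph_map @^-1` B `<=` A -> (graph_coupling B <= mu A)%E.
Proof.
move=> mB mA BA; rewrite graph_couplingE; apply: le_measure BA; rewrite inE //.
by rewrite -[_ @^-1` _]setTI; apply: measurable_graph_map.
Qed.

End pushforward_on_finite_set.

Section transport_cost.
Context {R : realType} {d : measure_display} {X : measurableType d}.
Context (rho : X -> X -> R) {P : probability (X * X)%type R} {G : set (X * X)}.
Context {eps dd : R}.
Hypotheses (mG : measurable G) (eps0 : 0 < eps) (rho_ge0 : forall x y, 0 <= rho x y).
Hypotheses (rho_le : forall x y, rho x y <= dd) (rho_G : forall z, G z -> rho z.1 z.2 < eps).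

Lemma integral_cost_le :
  (\int[P]_z (rho z.1 z.2)%:E <= eps%:E + dd%:E * P (~` G))%E.
Proof.
have dd0 : 0 <= dd := le_trans (rho_ge0 point point) (rho_le point point).
have mGc : measurable (~` G) by apply: measurableC.
apply: (le_trans (y := \int[P]_z (eps + dd * \1_(~` G) z)%:E)%E).
  apply: ge0_le_integral_lower => [z|z]; first by rewrite lee_fin rho_ge0.
  rewrite lee_fin indicE; have [Gz|nGz] := pselect (G z).
    by rewrite memNset ?mulr0 ?addr0 ?ltW ?rho_G // => /(_ Gz).
  by rewrite mem_set // mulr1 (le_trans (rho_le _ _)) // lerDr ltW.
under eq_integral do rewrite EFinD.
rewrite ge0_integralD //; last 3 first.
- by move=> z _; rewrite lee_fin ltW.
- by move=> z _; rewrite lee_fin mulr_ge0.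
- exact/measurable_EFinP/measurable_funM.
rewrite integral_cst // [X in (eps%:E * X)%E]probability_setT mule1.
rewrite (@integralZl_indic _ _ _ P setT measurableT (fun=> ~` G) dd) //.
  by rewrite integral_indic // setIT.
by move=> dd_lt0; move: dd0; rewrite leNgt dd_lt0.
Qed.

End transport_cost.

Section transport_to_centers.
Context {R : realType} {d : measure_display} {X : measurableType d}.
Variables (rho : X -> X -> R) (eps : R) (s : seq X).

Definition center_balls : set (X * X) :=
  \big[setU/set0]_(a <- s) ([set a] `*` km_rball rho a eps).

Lemma measurable_center_balls : (forall x : X, measurable [set x]) ->
  (forall a, measurable (km_rball rho a eps)) -> measurable center_balls.
Proof. by move=> mset1 mball; apply: bigsetU_measurable => a _; apply: measurableX. Qed.

Lemma center_balls_lt z : center_balls z -> rho z.1 z.2 < eps.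
Proof. by rewrite /center_balls -bigcup_seq => -[a _ [/= -> ]]. Qed.

Lemma center_balls_graph (f : X -> X) y : f y \in s -> rho (f y) y < eps ->
  center_balls (f y, y).
Proof. by move=> fs fy; rewrite /center_balls -bigcup_seq; exists (f y). Qed.

End transport_to_centers.

Lemma km_kantorovich_push_lt {R : realType} {d : measure_display}
    {X : measurableType d} {rho : X -> X -> R} {mu : probability X R}
    {f : X -> X} {s : seq X} {X' : set X} {eps dd : R} :
  (forall x : X, measurable [set x]) -> measurable_fun setT f ->
  (forall y, f y \in s) -> uniq s -> (forall a, measurable (km_rball rho a eps)) ->
  (forall x y, 0 <= rho x y) -> (forall x y, rho x y <= dd) -> 0 < eps ->
  measurable X' -> ((1 - eps)%:E < mu X')%E ->
  (forall y, X' y -> rho (f y) y < eps) ->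
  (km_kantorovich rho (push_weight mu f s) (push_atom s) mu < ((dd + 1) * eps)%:E)%E.
Proof.
move=> mset1 mf f_in s_uniq mball rho_ge0 rho_le eps0 mX' muX' f_near.
set pi := graph_coupling mu f mf.
apply: (le_lt_trans (y := \int[pi]_z (rho z.1 z.2)%:E)%E).
  by apply: ereal_inf_lbound; exists pi => //; exact: km_coupling_graph.
have [dd0|dd_neq0] := eqVneq dd 0.
  (* rho vanishes identically, so take the whole space with eps / 2 *)
  have rho_half z : setT z -> rho z.1 z.2 < eps / 2.
    by move=> _; rewrite (le_lt_trans (rho_le _ _)) // dd0 divr_gt0.
  have eps2_gt0 : 0 < eps / 2 by rewrite divr_gt0.
  apply: le_lt_trans
    (integral_cost_le rho (P := pi) measurableT eps2_gt0 rho_ge0 rho_le rho_half) _.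
  by rewrite dd0 mul0e adde0 add0r mul1r lte_fin ltr_pdivrMr // ltr_pMr // ltr1n.
have dd_gt0 : 0 < dd by rewrite lt0r dd_neq0 (le_trans (rho_ge0 point point)).
have mG := measurable_center_balls rho eps s mset1 mball.
apply: le_lt_trans
  (integral_cost_le rho (P := pi) mG eps0 rho_ge0 rho_le (center_balls_lt rho eps s)) _.
have piGc : (pi (~` center_balls rho eps s) <= 1 - mu X')%E.
  rewrite -probability_setC //.
  apply: graph_coupling_le (measurableC mG) (measurableC mX') _.
  by move=> y /= nG X'y; apply/nG/center_balls_graph/f_near.
have fin_pi : pi (~` center_balls rho eps s) \is a fin_num.
  exact/fin_num_measure/measurableC.
have fin_mu : mu X' \is a fin_num by exact: fin_num_measure.
rewrite -(fineK fin_pi) -(fineK fin_mu) in piGc muX' *.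
rewrite -EFinM -EFinD lte_fin; rewrite -EFinB lee_fin lte_fin in piGc muX'.
nra.
Qed.

Theorem lemma3 (R : realType) (dX : measure_display) (X : measurableType dX)
  (rho : X -> X -> R) (mu : probability X R) :
  km_is_metric rho -> km_rho_compact rho -> km_is_borel rho -> km_nondegenerate rho mu ->
  forall eps : R, 0 < eps ->
    (km_H_eps rho ((km_diam rho + 1) * eps) mu <= km_H'_eps rho eps mu)%E.
Proof.
move=> rho_metric rho_cpt rho_borel _ eps eps0.
have [rho_ge0 _ _ _] := rho_metric.
have mopen A : km_rho_open rho A -> measurable A.
  by rewrite rho_borel; exact: sub_sigma_algebra.
have mball a : measurable (km_rball rho a eps).
  exact/mopen/km_rho_open_rball.
have mset1 (a : X) : measurable [set a].
  by rewrite -[[set a]]setCK; apply: measurableC; exact/mopen/km_rho_open_setC1.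
have rho_diam := le_km_diam (km_rho_compact_bounded rho_metric rho_cpt point).
apply: le_ereal_inf_tmp => _ [k [k0 [X' [mX' muX' [xs cover]]]] <-].
pose s := undup [seq xs i | i <- enum 'I_k].
have xs_s i : xs i \in s by rewrite mem_undup map_f ?mem_enum.
have s_uniq : uniq s := undup_uniq _.
pose f := first_center rho eps (xs (Ordinal k0)) s.
have f_in y : f y \in s.
  by move: (first_center_in rho eps (xs (Ordinal k0)) s y); rewrite /f inE => /predU1P[->|].
have f_near y : X' y -> rho (f y) y < eps.
  by move=> /cover[i _ ?]; apply: first_center_rball; exists (xs i).
have mf : measurable_fun setT f by exact: measurable_first_center.
apply: (le_trans (y := km_entropy (push_weight mu f s))).
  apply: ereal_inf_lbound; exists (push_weight mu f s), (push_atom s); split => //.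
  - exact: push_discrete_prob.
  - by rewrite (km_entropy_push mu f s mset1 mf) ltry.
  - exact: (km_kantorovich_push_lt mset1 mf f_in s_uniq mball rho_ge0 rho_diam
      eps0 mX' muX' f_near).
have s_gt0 : (0 < size s)%N.
  by apply: (leq_ltn_trans (leq0n (index (xs (Ordinal k0)) s))); rewrite index_mem.
apply: le_trans (km_entropy_push_le mu f s mset1 mf f_in s_uniq s_gt0) _.
rewrite lee_fin ler_ln ?posrE ?ltr0n // ler_nat.
by rewrite (leq_trans (size_undup _)) // size_map size_enum_ord.
Qed.
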